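(* For every integer $x\ge3$, the number $\frac{x^2(x^2+4)}{5x^2-4}$ is not an integer. *)

From Stdlib Require Import ZArith.

(* Eliminating x from 25 x^2 (x^2 + 4) = (5 x^2 - 4)(5 x^2 + 24) + 96 shows that
   5 x^2 - 4 would divide 96; for x >= 5 it is too large, and x = 3, 4 give 41 and 76. *)
From Stdlib Require Import ZArith Lia.
Open Scope Z_scope.

Lemma divide_96_of_divide (x : Z) :
  (5 * x ^ 2 - 4 | x ^ 2 * (x ^ 2 + 4)) -> (5 * x ^ 2 - 4 | 96).
Proof.
  intro Hdiv.
  replace 96 with (25 * (x ^ 2 * (x ^ 2 + 4)) - (5 * x ^ 2 - 4) * (5 * x ^ 2 + 24))
    by ring.
  apply Z.divide_sub_r.
  - now apply Z.divide_mul_r.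
  - apply Z.divide_mul_l, Z.divide_refl.
Qed.

Theorem mainTheorem16 (x : Z) (hx : 3 <= x) :
  ~ (5 * x ^ 2 - 4 | x ^ 2 * (x ^ 2 + 4))%Z.
Proof.
  intro Hdiv.
  pose proof (divide_96_of_divide x Hdiv) as H96.
  assert (Hle : 5 * x ^ 2 - 4 <= 96) by (apply Z.divide_pos_le; [lia | exact H96]).
  assert (x = 3 \/ x = 4) as [-> | ->] by nia;
    apply Z.mod_divide in H96; [discriminate | lia | discriminate | lia].
Qed.
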